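(* Let $q=2^r$ with $r\ge 3$. Let $f\in\mathbb F_q[X,Y]$ be a local permutation polynomial whose permutation polynomial tuple consists of the $q$ elements of the group $G_2=\{b^ja^i:0\le j\le \frac q2-1,\ 0\le i\le 1\}$ (in some order), where $a$ and $b$ are as defined below. Then $f$ has a companion.
   Context: The elements of $\mathbb F_q$ are enumerated as $\mathbb F_q=\{c_0,\dots,c_{q-1}\}$; $\mathfrak S_q$ is the symmetric group of permutations of $\mathbb F_q$, composed right to left, written in cycle notation. $a=(c_0,c_1)(c_2,c_3)\cdots(c_{q-2},c_{q-1})$ and $b=(c_{\frac q2-2},c_{\frac q2-4},\dots,c_2,c_0,c_{\frac q2},c_{\frac q2+2},\dots,c_{q-4},c_{q-2})\,(c_1,c_3,\dots,c_{\frac q2-1},c_{q-1},c_{q-3},\dots,c_{\frac q2+1})$. ($G_2$ is a subgroup of $\mathfrak S_q$ of order $q$ whose non-identity elements have no fixed points.) Every function $\mathbb F_q^2\to\mathbb F_q$ is identified with the unique polynomial in $\mathbb F_q[X,Y]$ of degree $<q$ in each variable representing it. $f$ is a local permutation polynomial (LPP) if $x\mapsto f(x,y_0)$ and $y\mapsto f(x_0,y)$ are permutations of $\mathbb F_q$ for all $x_0,y_0$. A permutation polynomial tuple is $(\beta_0,\dots,\beta_{q-1})\in\mathfrak S_q^q$ such that $\beta_i^{-1}\beta_j$ has no fixed point whenever $i\ne j$; LPPs $f$ correspond bijectively to such tuples via $f(x,\beta_i(x))=c_i$ for all $x$ and all $i$. Two LPPs $f,g$ are orthogonal (companions) if for every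 $(u,v)\in\mathbb F_q^2$ the system $f(X,Y)=u$, $g(X,Y)=v$ has exactly one solution in $\mathbb F_q^2$; a companion of $f$ is an LPP orthogonal to $f$. *)

From mathcomp Require Import all_boot all_order all_algebra all_fingroup.
Set Implicit Arguments.
Unset Strict Implicit.
Unset Printing Implicit Defensive.

(* Index-level description of the permutations a and b of the paper, where
   F_q = {c_0, ..., c_{q-1}}:  a (c_i) = c_(a_idx i),  b (c_i) = c_(b_idx q i). *)

(* a = (c_0,c_1)(c_2,c_3)...(c_{q-2},c_{q-1}) *)
Definition a_idx (i : nat) : nat := if odd i then i.-1 else i.+1.

(* b = (c_{q/2-2}, c_{q/2-4}, ..., c_2, c_0, c_{q/2}, c_{q/2+2}, ..., c_{q-2})
       (c_1, c_3, ..., c_{q/2-1}, c_{q-1}, c_{q-3}, ..., c_{q/2+1}),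
   each cycle sending an entry to the next one and the last to the first. *)
Definition b_idx (q i : nat) : nat :=
  let h := q./2 in
  if ~~ odd i then
    (if i == 0 then h
     else if i < h then i - 2
     else if i == q - 2 then h - 2
     else i + 2)
  else
    (if i == h - 1 then q - 1
     else if i < h then i + 2
     else if i == h + 1 then 1
     else i - 2).

(* f : F_q^2 -> F_q (identified with its reduced polynomial) is a local
   permutation polynomial. *)
Definition is_LPP (F : finFieldType) (f : F -> F -> F) : Prop :=
  (forall y0 : F, bijective (fun x => f x y0)) /\
  (forall x0 : F, bijective (fun y => f x0 y)).

(* (beta_0, ..., beta_{q-1}) is a permutation polynomial tuple:
   beta_i^{-1} beta_j (apply beta_j first) has no fixed point for i <> j. *)
Definition is_ppt (F : finFieldType) (q : nat) (beta : 'I_q -> {perm F}) : Prop :=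
  forall i j : 'I_q, i != j -> forall x : F, ((beta j * (beta i)^-1)%g x != x).

Definition ppt_of (F : finFieldType) (q : nat) (c : 'I_q -> F)
  (f : F -> F -> F) (beta : 'I_q -> {perm F}) : Prop :=
  is_ppt beta /\ forall (i : 'I_q) (x : F), f x (beta i x) = c i.

Definition orthogonal_polys (F : finFieldType) (f g : F -> F -> F) : Prop :=
  forall u v : F, exists! p : F * F, f p.1 p.2 = u /\ g p.1 p.2 = v.

(* G_2 = { b^j a^i : 0 <= j <= q/2 - 1, 0 <= i <= 1 }, composition right to left;
   in mathcomp (s * t) x = t (s x), so b^j a^i is (a ^+ i * b ^+ j)%g. *)
Definition G2 (F : finFieldType) (q : nat) (a b : {perm F}) : {set {perm F}} :=
  [set (a ^+ i * b ^+ j)%g | j : 'I_(q./2), i : 'I_2].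

From mathcomp Require Import all_boot all_order all_algebra all_fingroup.
From mathcomp Require Import zify ring.

Set Implicit Arguments.
Unset Strict Implicit.
Unset Printing Implicit Defensive.

Import GRing.Theory.

(* Write q = 4n.  The points c_i get coordinates (k, e) in Z_(2n) x F_2 in
   which a flips e and b shifts k by (-1)^e; then b^j a^i acts as
   rho_(i,j)(k, e) = (k + (-1)^(e+i) j, e + i), and G_2 is a group acting
   regularly on F.  If a permutation sigma of F agrees with every element of
   G_2 in at most one point, then f(x, sigma^-1 y) is a companion of f, since
   beta_i x = sigma (beta_k x) means that beta_i beta_k^-1 in G_2 agrees with
   sigma at beta_k x.  Such a sigma is (k, e) |-> (e - k, s(k, e)) with a
   suitable bit s; the element of G_2 agreeing with sigma at (k, e) is
   rho_(e+s, t) with t = (-1)^s (e - 2k), and (e + s, t) determines (k, e). *)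

(* With q = 4n, c_(pos n k false) is the k-th point of the cycle of b through
   c_0, and c_(pos n k true) is its image under a. *)
Definition pos (n k : nat) (e : bool) : nat :=
  (if k == 0 then 0 else if k <= n then 2 * n + 2 * (k - 1) else 2 * (2 * n - k)) + e.

Lemma pos_lt n k e : k < 2 * n -> pos n k e < 4 * n.
Proof. by rewrite /pos; case: e; repeat case: ifP; lia. Qed.

Lemma pos_inj n k k' e e' : k < 2 * n -> k' < 2 * n ->
  pos n k e = pos n k' e' -> k = k' /\ e = e'.
Proof. by rewrite /pos; case: e; case: e'; repeat case: ifP; lia. Qed.

Lemma a_idx_pos n k e : a_idx (pos n k e) = pos n k (~~ e).
Proof. by rewrite /a_idx /pos; case: e; repeat case: ifP; lia. Qed.

Lemma half_mul4 n : (4 * n)./2 = 2 * n.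
Proof. by rewrite (_ : 4 * n = (2 * n).*2) ?doubleK // -mul2n; lia. Qed.

Lemma b_idx_pos_even n k : 2 <= n -> k < 2 * n ->
  b_idx (4 * n) (pos n k false) = pos n (if k.+1 == 2 * n then 0 else k.+1) false.
Proof. by move=> n2 kn; rewrite /b_idx half_mul4 /pos /=; repeat case: ifP => //=; lia. Qed.

Lemma b_idx_pos_odd n k : 2 <= n -> k < 2 * n ->
  b_idx (4 * n) (pos n k true) = pos n (if k == 0 then 2 * n - 1 else k - 1) true.
Proof. by move=> n2 kn; rewrite /b_idx half_mul4 /pos /=; repeat case: ifP => //=; lia. Qed.

(* The permutation sigma of the companion is, in coordinates (k, e) on
   Z_(2n) x F_2, (k, e) |-> (e - k, [n <= k] if e = 0, [0 < k <= n] if e = 1);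
   sig_idx gives its first coordinate as a representative in [0, 2n). *)
Definition sig_idx (n k : nat) (e : bool) : nat * bool :=
  if e then (if k == 0 then 1 else if k == 1 then 0 else (2 * n).+1 - k, (0 < k) && (k <= n))
  else (if k == 0 then 0 else 2 * n - k, n <= k).

(* lam_idx n k e represents (-1)^s (e - 2k) in [0, 2n), s = (sig_idx n k e).2:
   the shift of the element of G_2 that agrees with sigma at (k, e). *)
Definition lam_idx (n k : nat) (e : bool) : nat :=
  if e then (if k == 0 then 1 else if k <= n then 2 * k - 1 else 4 * n + 1 - 2 * k)
  else (if k < n then (if k == 0 then 0 else 2 * n - 2 * k) else 2 * k - 2 * n).

Lemma sig_idx_lt n k e : 2 <= n -> k < 2 * n -> (sig_idx n k e).1 < 2 * n.
Proof. by rewrite /sig_idx; case: e; repeat case: ifP => //=; lia. Qed.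

Lemma sig_idx_inj n k k' e e' : 2 <= n -> k < 2 * n -> k' < 2 * n ->
  sig_idx n k e = sig_idx n k' e' -> k = k' /\ e = e'.
Proof.
rewrite /sig_idx => n2 kn kn'; case: e; case: e'; repeat case: ifP => //=; move=> *;
  repeat match goal with H : (_, _) = (_, _) |- _ => case: H => * end; lia.
Qed.

Lemma lam_idx_lt n k e : 2 <= n -> k < 2 * n -> lam_idx n k e < 2 * n.
Proof. by rewrite /lam_idx; case: e; repeat case: ifP => //=; lia. Qed.

Lemma lam_idx_inj n k k' e e' : 2 <= n -> k < 2 * n -> k' < 2 * n ->
  e (+) (sig_idx n k e).2 = e' (+) (sig_idx n k' e').2 ->
  lam_idx n k e = lam_idx n k' e' -> k = k' /\ e = e'.
Proof. by rewrite /sig_idx /lam_idx; case: e; case: e'; repeat case: ifP => //=; lia. Qed.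

Lemma sig_idx_lam_idx_mod n k e : 2 <= n -> k < 2 * n ->
  exists m, if (sig_idx n k e).2 then (sig_idx n k e).1 + lam_idx n k e = k + m * (2 * n)
            else (sig_idx n k e).1 + m * (2 * n) = k + lam_idx n k e.
Proof.
rewrite /sig_idx /lam_idx => n2 kn; case: e; repeat case: ifP => //= *;
  first [exists 0; repeat case: ifP => //=; lia | exists 1; repeat case: ifP => //=; lia].
Qed.

Section ZpCoordinates.

Local Open Scope ring_scope.

Variable n : nat.
Hypothesis n_ge2 : (2 <= n)%N.

Local Notation Z := 'Z_(2 * n).

Lemma ltn_Zp2n (k : Z) : (k < 2 * n)%N.
Proof. by apply: leq_trans (ltn_ord k) _; rewrite Zp_cast //; lia. Qed.

Lemma val_Zp2n_nat (m : nat) : (m%:R : Z) = (m %% (2 * n))%N :> nat.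
Proof. by rewrite /= val_Zp_nat //; lia. Qed.

Lemma natr_Zp2n_inj (x y : nat) : (x < 2 * n)%N -> (y < 2 * n)%N ->
  (x%:R : Z) = y%:R -> x = y.
Proof. by move=> xl yl /(congr1 (@nat_of_ord _)); rewrite !val_Zp2n_nat !modn_small. Qed.

Lemma val_Zp2n_add1 (k : Z) :
  k + 1 = (if k.+1 == 2 * n then 0 else k.+1)%N :> nat.
Proof.
rewrite -[k in k + 1]natr_Zp natr1 val_Zp2n_nat.
have := ltn_Zp2n k; case: eqP => [-> _|ne kl]; first by rewrite modnn.
by rewrite modn_small //; lia.
Qed.

Lemma val_Zp2n_sub1 (k : Z) :
  k - 1 = (if k == 0 :> nat then 2 * n - 1 else k - 1)%N :> nat.
Proof.
have m1 : ((2 * n - 1)%N%:R : Z) = -1.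
  apply/eqP; rewrite -addr_eq0 natr1 (_ : (2 * n - 1).+1 = 2 * n)%N; last by lia.
  by apply/eqP/pchar_Zp; lia.
rewrite -m1 -[k in k + _]natr_Zp -natrD val_Zp2n_nat.
have := ltn_Zp2n k; case: eqP => [-> _|ne kl]; first by rewrite add0n modn_small //; lia.
by rewrite (_ : (k + (2 * n - 1) = (k - 1) + 2 * n)%N) ?modnDr ?modn_small //; lia.
Qed.

Definition sgn (e : bool) : Z := (-1) ^+ e.

Definition rho (eps : bool) (t : Z) (z : Z * bool) : Z * bool :=
  (z.1 + sgn (z.2 (+) eps) * t, z.2 (+) eps).

Lemma rho_inj eps t : injective (rho eps t).
Proof.
move=> [k e] [k' e'] /pair_equal_spec [E1 E2].
have ee : e = e' by move: E2 => /(congr1 (addb ^~ eps)); rewrite -!addbA addbb !addbF.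
by move: E1; rewrite /= ee => /addIr ->.
Qed.

Lemma rho_left_div eps t eps' t' :
  exists d u, forall z, rho eps t z = rho d u (rho eps' t' z).
Proof.
exists (eps (+) eps'), (t - sgn (eps (+) eps') * t') => -[k e]; rewrite /rho /=.
congr pair; last by case: eps; case: eps'; case: e.
by case: e; case: eps; case: eps'; rewrite /sgn /= ?expr0 ?expr1; ring.
Qed.

Definition sigc (z : Z * bool) : Z * bool :=
  (((sig_idx n z.1 z.2).1)%:R, (sig_idx n z.1 z.2).2).

Lemma sigc_inj : injective sigc.
Proof.
move=> [k e] [k' e'] /pair_equal_spec [E1 E2].
have kl := ltn_Zp2n k; have kl' := ltn_Zp2n k'.
have E1' := natr_Zp2n_inj (sig_idx_lt e n_ge2 kl) (sig_idx_lt e' n_ge2 kl') E1.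
have /sig_idx_inj [//|//|//|kk ->] : sig_idx n k e = sig_idx n k' e'.
  by move: E1' E2; case: sig_idx => ? ?; case: sig_idx => ? ? /= -> ->.
by congr pair; apply: val_inj.
Qed.

Lemma sigc_rhoP d u (w : Z * bool) : sigc w = rho d u w ->
  d = w.2 (+) (sig_idx n w.1 w.2).2 /\ u = lam_idx n w.1 w.2 :> nat.
Proof.
case: w => k e /pair_equal_spec [E1 E2]; split; first by rewrite /= E2 addKb.
have kl := ltn_Zp2n k.
have [m Hm] := sig_idx_lam_idx_mod e n_ge2 kl.
rewrite /= -E2 in E1.
have L_lt := lam_idx_lt e n_ge2 kl.
have two_n0 : ((2 * n)%N%:R : Z) = 0 by apply: pchar_Zp; lia.
suff -> : u = (lam_idx n k e)%:R by rewrite val_Zp2n_nat modn_small.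
move: Hm E1; case: (sig_idx _ _ _).2 => /(congr1 (fun y => (y%:R : Z)));
  rewrite !natrD natrM two_n0 mulr0 addr0 natr_Zp /sgn /= => H E1.
- rewrite expr1 mulN1r in E1.
  have -> : u = k - (sig_idx n k e).1%:R by rewrite E1; ring.
  by rewrite -[k in k - _]H; ring.
- by rewrite expr0 mul1r in E1; apply: (addrI k); rewrite -E1 H.
Qed.

Lemma sigc_rho_uniq d u w w' : sigc w = rho d u w -> sigc w' = rho d u w' -> w = w'.
Proof.
move=> /sigc_rhoP [d1 u1] /sigc_rhoP [d2 u2].
have [kk ee] := lam_idx_inj n_ge2 (ltn_Zp2n w.1) (ltn_Zp2n w'.1)
  (etrans (esym d1) d2) (etrans (esym u1) u2).
by move: kk ee {d1 u1 d2 u2}; case: w => k e; case: w' => k' e' /= /ord_inj -> ->.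
Qed.

End ZpCoordinates.

Section CompanionCriterion.

Variables (F : finFieldType) (q : nat) (c : 'I_q -> F) (f : F -> F -> F).
Variable beta : 'I_q -> {perm F}.
Hypotheses (card_F : #|F| = q) (c_bij : bijective c) (f_ppt : ppt_of c f beta).

Lemma ppt_cover x y : exists i, beta i x = y.
Proof.
have beta_x_inj : injective (fun i => beta i x).
  move=> i j /= E; apply/eqP; apply/negPn/negP => /(f_ppt.1 _ _)/(_ x).
  by rewrite permM -E -permM mulgV perm1 eqxx.
have := @inj_card_onto _ _ _ beta_x_inj; rewrite card_ord card_F leqnn.
by move=> /(_ isT y) /codomP [i ->]; exists i.
Qed.

Lemma ppt_fiber x y i : f x y = c i -> y = beta i x.
Proof.
have [j <-] := ppt_cover x y.
by rewrite f_ppt.2 => /(bij_inj c_bij) ->.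
Qed.

(* f = c_i and f(x, sigma^-1 y) = c_k at (x, y) iff y = beta_i x = sigma (beta_k x);
   the hypothesis makes such an x unique, and counting makes it exist. *)
Lemma orthogonal_comp_perm (sigma : {perm F}) :
  (forall i k x x', beta i x = sigma (beta k x) ->
     beta i x' = sigma (beta k x') -> x = x') ->
  orthogonal_polys f (fun x y => f x ((sigma^-1)%g y)).
Proof.
move=> sigma_uniq u v.
have [[i <-] [k <-]] : (exists i, c i = u) /\ (exists k, c k = v).
  by case: c_bij => ci _ ciK; split; [exists (ci u) | exists (ci v)]; rewrite ciK.
have meet x j : exists j', beta j' x == sigma (beta j x).
  by have [j' E] := ppt_cover x (sigma (beta j x)); exists j'; apply/eqP.
pose phi x := xchoose (meet x k).
have phiP x : beta (phi x) x = sigma (beta k x) by apply/eqP/(xchooseP (meet x k)).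
have phi_inj : injective phi.
  by move=> x x' E; apply: (sigma_uniq (phi x) k); [|rewrite E]; apply: phiP.
have := @inj_card_onto _ _ _ phi_inj; rewrite card_ord card_F leqnn.
move=> /(_ isT i) /codomP [x Ex].
exists (x, beta i x); split=> [|[x' y'] /= [/ppt_fiber Y1 /ppt_fiber Y2]].
  by rewrite /= f_ppt.2 Ex phiP permK f_ppt.2.
have xx' : x = x'.
  by apply: (sigma_uniq i k); [rewrite Ex phiP | rewrite -Y1 -Y2 permKV].
by rewrite -xx' Y1 xx'.
Qed.

End CompanionCriterion.

Lemma is_LPP_comp_perm (F : finFieldType) (f : F -> F -> F) (sigma : {perm F}) :
  is_LPP f -> is_LPP (fun x y => f x ((sigma^-1)%g y)).
Proof.
case=> f_x f_y; split=> [y0|x0]; first exact: f_x.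
by apply: bij_comp (f_y x0) _; apply: injF_bij; apply: perm_inj.
Qed.

Section G2Coordinates.

Local Open Scope ring_scope.

Variables (F : finFieldType) (n q : nat).
Hypotheses (n_ge2 : (2 <= n)%N) (q_eq : q = (4 * n)%N) (card_F : #|F| = q).
Variables (c : 'I_q -> F) (a b : {perm F}).
Hypotheses (c_inj : injective c)
  (c_a : forall i j : 'I_q, nat_of_ord j = a_idx i -> a (c i) = c j)
  (c_b : forall i j : 'I_q, nat_of_ord j = b_idx q i -> b (c i) = c j).

Local Notation Z := 'Z_(2 * n).

Lemma pos_ltq (z : Z * bool) : (pos n z.1 z.2 < q)%N.
Proof. by rewrite q_eq; apply/pos_lt/ltn_Zp2n. Qed.

Definition coord (z : Z * bool) : F := c (Ordinal (pos_ltq z)).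

Lemma coord_inj : injective coord.
Proof.
move=> [k e] [k' e'] /c_inj /(congr1 (@nat_of_ord _)) /=.
by case/(pos_inj (ltn_Zp2n n_ge2 k) (ltn_Zp2n n_ge2 k')) => /ord_inj -> ->.
Qed.

Lemma coord_onto x : exists z, coord z = x.
Proof.
have card_le : (#|F| <= #|{: Z * bool}|)%N.
  by rewrite card_F q_eq card_prod card_bool card_ord Zp_cast; lia.
by have /codomP [z ->] := inj_card_onto coord_inj card_le x; exists z.
Qed.

Lemma a_coord k e : a (coord (k, e)) = coord (k, ~~ e).
Proof. by apply: c_a; cbn [nat_of_ord fst snd]; rewrite a_idx_pos. Qed.

Lemma b_coord_even k : b (coord (k, false)) = coord (k + 1, false).
Proof.
apply: c_b; cbn [nat_of_ord fst snd].
by rewrite (val_Zp2n_add1 n_ge2) q_eq b_idx_pos_even //; apply: ltn_Zp2n.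
Qed.

Lemma b_coord_odd k : b (coord (k, true)) = coord (k - 1, true).
Proof.
apply: c_b; cbn [nat_of_ord fst snd].
by rewrite (val_Zp2n_sub1 n_ge2) q_eq b_idx_pos_odd //; apply: ltn_Zp2n.
Qed.

Lemma bX_coord (j : nat) k e :
  (b ^+ j)%g (coord (k, e)) = coord (k + sgn n e * j%:R, e).
Proof.
elim: j k => [|j IH] k; first by rewrite expg0 perm1 mulr0 addr0.
rewrite expgSr permM IH -natr1; case: (e) {IH}.
- by rewrite b_coord_odd /sgn expr1; congr (coord (_, _)); ring.
- by rewrite b_coord_even /sgn expr0; congr (coord (_, _)); ring.
Qed.

Lemma G2_coord g : g \in G2 q a b ->
  exists eps t, forall z, g (coord z) = coord (rho eps t z).
Proof.
case/imset2P=> j i _ _ ->; exists (i == 1 :> nat), (j%:R) => -[k e].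
rewrite permM /rho /= -bX_coord; congr (_ _).
by case: i => -[|[|//]] i_lt /=; rewrite ?expg0 ?perm1 ?addbF ?expg1 ?a_coord ?addbT.
Qed.

Definition coord_inv (x : F) : Z * bool :=
  odflt (0, false) [pick z | coord z == x].

Lemma coord_invK : cancel coord_inv coord.
Proof.
move=> x; rewrite /coord_inv; case: pickP => [z /eqP //|none].
by have [z zx] := coord_onto x; move: (none z); rewrite zx eqxx.
Qed.

Lemma coordK : cancel coord coord_inv.
Proof. by move=> z; apply: coord_inj; rewrite coord_invK. Qed.

Lemma sigma_coord_inj : injective (coord \o @sigc n \o coord_inv).
Proof.
by move=> x y /= /coord_inj /(sigc_inj n_ge2) /(can_inj coord_invK).
Qed.

Definition sigma : {perm F} := perm sigma_coord_inj.

Lemma sigma_coord z : sigma (coord z) = coord (sigc z).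
Proof. by rewrite permE /= coordK. Qed.

Lemma G2_sigma_uniq g h x x' : g \in G2 q a b -> h \in G2 q a b ->
  g x = sigma (h x) -> g x' = sigma (h x') -> x = x'.
Proof.
move=> /G2_coord [eps [t g_rho]] /G2_coord [eps' [t' h_rho]].
have [d [u rho_div]] := rho_left_div eps t eps' t'.
have [z <-] := coord_onto x; have [z' <-] := coord_onto x'.
rewrite !g_rho !h_rho !sigma_coord !rho_div => /coord_inj E /coord_inj E'.
by congr coord; apply: (@rho_inj _ eps' t'); apply: (sigc_rho_uniq n_ge2 (esym E) (esym E')).
Qed.

End G2Coordinates.

Theorem theorem4p9 (F : finFieldType) (r : nat) (c : 'I_(2 ^ r) -> F)
  (a b : {perm F}) (f : F -> F -> F) (beta : 'I_(2 ^ r) -> {perm F}) :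
  3 <= r ->
  #|F| = 2 ^ r ->
  bijective c ->
  (forall i j : 'I_(2 ^ r), nat_of_ord j = a_idx i -> a (c i) = c j) ->
  (forall i j : 'I_(2 ^ r), nat_of_ord j = b_idx (2 ^ r) i -> b (c i) = c j) ->
  is_LPP f ->
  ppt_of c f beta ->
  [set beta i | i : 'I_(2 ^ r)] = G2 (2 ^ r) a b ->
  exists g : F -> F -> F, is_LPP g /\ orthogonal_polys f g.
Proof.
move=> r_ge3 card_F c_bij c_a c_b f_LPP f_ppt beta_G2.
pose n := 2 ^ (r - 2).
have q_eq : 2 ^ r = 4 * n by rewrite /n -(expnD 2 2) subnKC //; lia.
have n_ge2 : 2 <= n by rewrite -[2]/(2 ^ 1) leq_exp2l //; lia.
pose sigma := sigma n_ge2 q_eq card_F (bij_inj c_bij).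
exists (fun x y => f x ((sigma^-1)%g y)); split; first exact: is_LPP_comp_perm.
apply: (orthogonal_comp_perm card_F c_bij f_ppt) => i k x x'.
by apply: (G2_sigma_uniq c_a c_b); rewrite -beta_G2 imset_f.
Qed.
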